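(* Let $m\ge2$ and $t\ge1$, and let $H=K_{1,m}$ with center $v$ and leaves $v_1,\dots,v_m$. Let $T_H=\{v_1,\dots,v_{m-1}\}$ and $(T_H)_t=\{u_i^s: 1\le i\le m-1,\ 0\le s\le t\}$. Then $(T_H)_t$ is both a minimum twin cover and a minimum size determining set of $\mu_t(H)$; in particular $\det(\mu_t(K_{1,m}))=(t+1)(m-1)$.
   Context: All graphs are finite and simple. For a graph $G$ with $V(G)=\{v_1,\dots,v_n\}$ and an integer $t\ge1$, the generalized Mycielskian $\mu_t(G)$ has vertex set $\{u_i^s: 1\le i\le n,\ 0\le s\le t\}\cup\{w\}$, where $u_i^0$ is identified with $v_i$. Its edges are: $u_i^0u_j^0$ for each edge $v_iv_j$ of $G$; $u_i^su_j^{s+1}$ and $u_j^su_i^{s+1}$ for each edge $v_iv_j$ of $G$ and each $0\le s<t$; and $u_i^tw$ for all $1\le i\le n$. A set $S\subseteq V(G)$ is a determining set for $G$ if the only automorphism of $G$ fixing every vertex of $S$ is the identity; $\det(G)$ is the minimum size of a determining set. Two vertices are twins if they have the same open neighborhood. A minimum twin cover of a graph is a subset of its vertices of minimum size that contains at least one vertex from every pair of distinct twin vertices. *)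

From mathcomp Require Import all_boot all_fingroup.
Set Implicit Arguments. Unset Strict Implicit. Unset Printing Implicit Defensive.

(* A simple graph: a symmetric irreflexive relation e on a finite type V. *)

Section Graphs.
Variables (V : finType) (e : rel V).

Definition is_automorphism (f : {perm V}) : bool :=
  [forall x, forall y, e (f x) (f y) == e x y].

Definition determining (S : {set V}) : bool :=
  [forall f : {perm V}, (is_automorphism f && [forall x in S, f x == x]) ==> (f == 1%g)].

(* det(G): minimum size of a determining set (V itself is always one) *)
Definition det_number : nat :=
  \big[minn/#|V|]_(S : {set V} | determining S) #|S|.

Definition min_determining_set (S : {set V}) : Prop :=
  determining S /\ forall S' : {set V}, determining S' -> #|S| <= #|S'|.

Definition nbhd (x : V) : {set V} := [set y | e x y].
Definition twins (x y : V) : bool := (x != y) && (nbhd x == nbhd y).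

Definition twin_cover (S : {set V}) : bool :=
  [forall x, forall y, twins x y ==> (x \in S) || (y \in S)].

Definition min_twin_cover (S : {set V}) : Prop :=
  twin_cover S /\ forall S' : {set V}, twin_cover S' -> #|S| <= #|S'|.

End Graphs.

(* Generalized Mycielskian mu_t(G): vertex Some (x, s) is u_x^s (s = 0..t),
   None is the extra vertex w. *)
Definition myc_rel (V : finType) (e : rel V) (t : nat) : rel (option (V * 'I_t.+1)) :=
  fun a b =>
    match a, b with
    | Some (x, s), Some (y, r) =>
        e x y && [|| (val s == 0) && (val r == 0), val r == (val s).+1 | val s == (val r).+1]
    | Some (_, s), None => val s == t
    | None, Some (_, r) => val r == t
    | None, None => false
    end.

(* The star K_{1,m} on 'I_m.+1: center 0, leaves 1..m. *)
Definition star_rel (m : nat) : rel 'I_m.+1 :=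
  fun i j => (val i == 0) != (val j == 0).

Definition TH_t (m t : nat) : {set option ('I_m.+1 * 'I_t.+1)} :=
  [set a | if a is Some (i, _) then (1 <= val i) && (val i <= m - 1) else false].

From mathcomp Require Import all_boot all_fingroup zify.
Set Implicit Arguments. Unset Strict Implicit. Unset Printing Implicit Defensive.

(* In a simple graph, swapping two twins is an automorphism,
   so every determining set is a twin cover; hence a twin cover of minimum
   size that is also determining is a minimum determining set, and its size
   is det(G).  Both "twin cover" and "determining" follow from one property:
   a set A "resolves the vertices outside S" if two vertices outside S with
   the same adjacencies to A coincide.  Such an S is a twin cover, and it is
   determining as soon as every automorphism fixing S also fixes A.  A twin
   cover lower bound is obtained by injecting a set T into any twin cover.

   In mu_t(K_{1,m}) the copies u_1^r of the first leaf (which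
   lie in (T_H)_t) distinguish every non-leaf vertex from all others; hence
   they force automorphisms fixing (T_H)_t to fix the centre copies u_0^s,
   and the centre copies in turn separate the leaf copies u_m^s by level.
   So (T_H)_t together with the centre copies resolves the vertices outside
   (T_H)_t.  The leaf copies of a fixed level are pairwise twins, which gives
   the lower bound (t+1)(m-1) = |(T_H)_t| on any twin cover. *)

Lemma bigmin_le (I : finType) (P : pred I) (F : I -> nat) x0 i :
  P i -> \big[minn/x0]_(j | P j) F j <= F i.
Proof.
move=> Pi; have : i \in index_enum I by rewrite mem_index_enum.
elim: (index_enum I) => [|a l IH] //; rewrite inE big_cons => /orP [/eqP <-|/IH h].
  by rewrite Pi geq_minl.
by case: (P a) => //; rewrite geq_min h orbT.
Qed.

Section GraphFacts.
Variables (V : finType) (e : rel V).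

Lemma aut_adj (f : {perm V}) : is_automorphism e f -> forall a b, e (f a) (f b) = e a b.
Proof. by move=> /forallP autf a b; apply/eqP; move/forallP: (autf a). Qed.

Lemma twins_adj x y : twins e x y -> forall z, e x z = e y z.
Proof. by case/andP=> _ /eqP/setP eqN z; have := eqN z; rewrite !inE. Qed.

Lemma det_number_min S : min_determining_set e S -> det_number e = #|S|.
Proof.
case=> detS minS; apply/eqP; rewrite eqn_leq (bigmin_le _ _ detS) /=.
apply: (big_ind (fun n => #|S| <= n)) => [|a b ha hb|S' /minS //].
  exact: max_card.
by rewrite leq_min ha hb.
Qed.

(* Lower bound for twin covers: if g sends each x in T outside T to a twin
   of x, then T injects into any twin cover S (send x to x if x is in S and
   to g x otherwise; two elements with the same image g x are twins). *)
Lemma twin_cover_lower_bound (S T : {set V}) (g : V -> V) :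
  twin_cover e S -> {in T, forall x, (g x \notin T) && twins e x (g x)} ->
  #|T| <= #|S|.
Proof.
move=> /forallP coverS gT.
have cover x y : twins e x y -> (x \in S) || (y \in S).
  by move/forallP: (coverS x) => /(_ y)/implyP.
pose h x := if x \in S then x else g x.
have hS : {in T, forall x, h x \in S}.
  by move=> x /gT/andP[_ /cover]; rewrite /h; case: ifP.
have h_inj : {in T &, injective h}.
  move=> x y xT yT; rewrite /h.
  have /andP[gxT twx] := gT x xT; have /andP[gyT twy] := gT y yT.
  case: ifP => xS; case: ifP => yS // hxy.
  - by move: gyT; rewrite -hxy xT.
  - by move: gxT; rewrite hxy yT.
  apply/eqP/negPn/negP => nxy; suff /cover : twins e x y by rewrite xS yS.
  move: twx twy => /andP[_ /eqP Nx] /andP[_ /eqP Ny].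
  by rewrite /twins nxy /= Nx Ny hxy.
rewrite -(card_in_imset h_inj); apply/subset_leq_card/subsetP.
by move=> _ /imsetP[x xT ->]; exact: hS.
Qed.

Definition resolves_outside (A S : {set V}) : Prop :=
  forall x z, x \notin S -> z \notin S -> {in A, forall a, e x a = e z a} -> x = z.

Lemma twin_cover_of_resolving A S : resolves_outside A S -> twin_cover e S.
Proof.
move=> resA; apply/forallP=> x; apply/forallP=> y; apply/implyP=> tw.
apply/negPn/negP=> /norP[xS yS]; move: (tw) => /andP[/eqP []].
by apply: resA => // a _; exact: twins_adj.
Qed.

(* If automorphisms fixing S also fix A, and A resolves the vertices outside
   S, then S is determining: an automorphism f fixing S maps a vertex x
   outside S to a vertex outside S with the same adjacencies to A. *)
Lemma determining_of_resolving A S : resolves_outside A S ->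
  (forall f, is_automorphism e f -> {in S, forall x, f x = x} ->
             {in A, forall a, f a = a}) ->
  determining e S.
Proof.
move=> resA fixA; apply/forallP=> f; apply/implyP=> /andP[autf /forall_inP fixS].
have fS : {in S, forall x, f x = x} by move=> x /fixS/eqP.
have fA := fixA f autf fS.
apply/eqP/permP=> x; rewrite perm1.
have [//|xS] := boolP (x \in S); first exact: fS.
apply: resA => // [|a aA].
  by apply: contra xS => fxS; rewrite -(perm_inj (fS _ fxS)).
by rewrite -{1}(fA a aA) aut_adj.
Qed.

Section SimpleGraph.
Hypotheses (e_sym : symmetric e) (e_irr : irreflexive e).

Lemma twins_swap_aut x y : twins e x y -> is_automorphism e (tperm x y).
Proof.
move=> tw; have adj := twins_adj tw.
apply/forallP=> a; apply/forallP=> b; apply/eqP.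
case: tpermP => [->|->|_ _]; case: tpermP => [->|->|_ _];
  by rewrite ?e_irr ?adj // ?(e_sym a) ?adj // e_sym.
Qed.

Lemma determining_twin_cover S : determining e S -> twin_cover e S.
Proof.
move=> detS; apply/forallP=> x; apply/forallP=> y; apply/implyP=> tw.
apply/negPn/negP=> /norP[xS yS].
have fixS : [forall z in S, tperm x y z == z].
  apply/forall_inP=> z zS; apply/eqP/tpermD.
    by apply: contraNneq xS => ->.
  by apply: contraNneq yS => ->.
move/forallP: detS => /(_ (tperm x y)); rewrite twins_swap_aut // fixS.
move=> /eqP swap1; move: tw; rewrite /twins -[y in x != y](tpermL x y).
by rewrite swap1 perm1 eqxx.
Qed.

Lemma min_determining_of_min_twin_cover S :
  min_twin_cover e S -> determining e S -> min_determining_set e S.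
Proof. by case=> _ minS detS; split=> // S' /determining_twin_cover/minS. Qed.

End SimpleGraph.
End GraphFacts.

Definition level_adj (s r : nat) : bool :=
  [|| (s == 0) && (r == 0), r == s.+1 | s == r.+1].

Lemma level_adj_sym : symmetric level_adj.
Proof. by move=> s r; rewrite /level_adj; lia. Qed.

Lemma level_adj_pred s : level_adj s s.-1.
Proof. by rewrite /level_adj; lia. Qed.

Section Mycielskian.
Variables (V : finType) (e : rel V) (t : nat).
Local Notation M := (@myc_rel _ e t).

Lemma myc_rel_some x y (s r : 'I_t.+1) :
  M (Some (x, s)) (Some (y, r)) = e x y && level_adj s r.
Proof. by []. Qed.

Lemma myc_rel_sym : symmetric e -> symmetric M.
Proof.
move=> e_sym [[x s]|] [[y r]|] //.
by rewrite !myc_rel_some e_sym level_adj_sym.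
Qed.

Lemma myc_rel_irr : irreflexive e -> irreflexive M.
Proof. by move=> e_irr [[x s]|] //; rewrite myc_rel_some e_irr. Qed.

Hypothesis ht : 1 <= t.

Lemma level_adj_inj (s s' : 'I_t.+1) :
  (forall r : 'I_t.+1, level_adj s r = level_adj s' r) -> s = s'.
Proof.
move=> H; have Hn r : r <= t -> level_adj s r = level_adj s' r.
  by move=> hr; have := H (inord r); rewrite inordK.
have lt_false (a b : nat) : a < b -> level_adj a a.-1 = level_adj b a.-1 ->
    level_adj a 1 = level_adj b 1 -> False.
  by rewrite /level_adj; lia.
have hs := ltn_ord s; have hs' := ltn_ord s'.
apply: val_inj; case: (ltngtP s s') => // lt; exfalso.
  by apply: (lt_false _ _ lt); apply: Hn; lia.
by apply: (lt_false _ _ lt); rewrite Hn //; lia.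
Qed.

Lemma exists_level_adj (s : 'I_t.+1) : exists2 r : 'I_t.+1, level_adj s r & r != t :> nat.
Proof.
exists (inord s.-1); rewrite inordK ?level_adj_pred //; have := ltn_ord s; lia.
Qed.

Lemma level_adj_not_top (s : 'I_t.+1) :
  ~ (forall r : 'I_t.+1, level_adj s r = (r == t :> nat)).
Proof.
have [r adj_sr ntop] := exists_level_adj s.
by move=> /(_ r); rewrite adj_sr (negbTE ntop).
Qed.

End Mycielskian.

Lemma star_sym m : symmetric (@star_rel m).
Proof. by move=> i j; rewrite /star_rel eq_sym. Qed.

Lemma star_irr m : irreflexive (@star_rel m).
Proof. by move=> i; rewrite /star_rel eqxx. Qed.

Section StarMycielskian.
Variables (m t : nat) (hm : 2 <= m) (ht : 1 <= t).
Local Notation V := (option ('I_m.+1 * 'I_t.+1)).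
Local Notation E := (@myc_rel _ (@star_rel m) t).
Local Notation TH := (TH_t m t).

Definition center (s : 'I_t.+1) : V := Some (ord0, s).
Definition first_leaf (r : 'I_t.+1) : V := Some (inord 1, r).
Definition centers : {set V} := [set center s | s : 'I_t.+1].
Definition is_leaf (x : V) : bool := if x is Some (i, _) then val i != 0 else false.

Lemma adj_first_leaf r x : E (first_leaf r) x =
  if x is Some (j, s) then (val j == 0) && level_adj s r else r == t :> nat.
Proof.
case: x => [[j s]|] //; rewrite myc_rel_some /star_rel /= inordK; last by lia.
by rewrite level_adj_sym; case: (val j == 0).
Qed.

Lemma adj_center c x : E (center c) x =
  if x is Some (j, s) then (val j != 0) && level_adj s c else c == t :> nat.
Proof. by case: x => [[j s]|] //; rewrite myc_rel_some level_adj_sym. Qed.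

Lemma mem_TH (i : 'I_m.+1) s : (Some (i, s) \in TH) = (0 < i < m).
Proof. by rewrite inE; case: i => i hi /=; lia. Qed.

Lemma first_leaf_TH r : first_leaf r \in TH.
Proof. by rewrite mem_TH inordK; lia. Qed.

Lemma leaf_outside_TH x : is_leaf x -> x \notin TH -> exists s, x = Some (ord_max, s).
Proof.
case: x => [[i s]|] //= i0; rewrite mem_TH => iTH; exists s.
by congr (Some (_, _)); apply: val_inj => /=; have := ltn_ord i; lia.
Qed.

Lemma nonleaf_resolved (y z : V) : ~~ is_leaf y ->
  (forall r, E (first_leaf r) y = E (first_leaf r) z) -> z = y.
Proof.
move=> ly H.
have {}H r := etrans (esym (adj_first_leaf r y)) (etrans (H r) (adj_first_leaf r z)).
case: y ly H => [[i s]|] /= ly H; case: z H => [[j c]|] //= H.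
- have [r adj_sr _] := exists_level_adj ht s.
  have j0 : val j == 0 by have := H r; rewrite (negbNE ly) adj_sr => /esym/andP[].
  congr (Some (_, _)); first by apply: val_inj; rewrite /= (eqP j0) (eqP (negbNE ly)).
  by apply: (level_adj_inj ht) => r'; have := H r'; rewrite (negbNE ly) j0 => /esym.
- by case: (level_adj_not_top ht (s := s)) => r; rewrite -H (negbNE ly).
- case: (boolP (val j == 0)) => j0.
    by case: (level_adj_not_top ht (s := c)) => r; rewrite H j0.
  by have := H ord_max; rewrite (negbTE j0) /= eqxx.
Qed.

Lemma leaf_level (i j : 'I_m.+1) (s s' : 'I_t.+1) : val i != 0 -> val j != 0 ->
  (forall c, E (center c) (Some (i, s)) = E (center c) (Some (j, s'))) -> s = s'.
Proof.
move=> i0 j0 H; apply: (level_adj_inj ht) => r.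
by have := H r; rewrite !adj_center i0 j0.
Qed.

Lemma TH_centers_resolve : resolves_outside E (TH :|: centers) TH.
Proof.
have Esym := myc_rel_sym (t := t) (@star_sym m).
move=> x z xTH zTH adj.
have adjL r : E (first_leaf r) x = E (first_leaf r) z.
  by rewrite !(Esym (first_leaf r)) adj // inE first_leaf_TH.
have [lx|lx] := boolP (is_leaf x); last exact/esym/(nonleaf_resolved lx).
have [lz|lz] := boolP (is_leaf z); last by apply: nonleaf_resolved lz _ => r; rewrite adjL.
have [s xE] := leaf_outside_TH lx xTH; have [s' zE] := leaf_outside_TH lz zTH.
subst x z.
have max0 : val (ord_max : 'I_m.+1) != 0 by rewrite /=; lia.
congr (Some (_, _)); apply: (leaf_level max0 max0) => c.
by rewrite !(Esym (center c)) adj // inE imset_f ?orbT.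
Qed.

Lemma aut_fixing_TH_fixes_centers f : is_automorphism E f ->
  {in TH, forall x, f x = x} -> {in TH :|: centers, forall a, f a = a}.
Proof.
move=> autf fTH a; rewrite inE => /orP[/fTH //|/imsetP[c _ ->]].
apply: nonleaf_resolved => // r.
by rewrite -{2}(fTH _ (first_leaf_TH r)) aut_adj.
Qed.

Lemma TH_determining : determining E TH.
Proof. exact: determining_of_resolving TH_centers_resolve aut_fixing_TH_fixes_centers. Qed.

Lemma TH_twin_cover : twin_cover E TH.
Proof. exact: twin_cover_of_resolving TH_centers_resolve. Qed.

Lemma twins_same_level (i j : 'I_m.+1) s : val i != 0 -> val j != 0 -> i != j ->
  twins E (Some (i, s)) (Some (j, s)).
Proof.
move=> i0 j0 ij; rewrite /twins; apply/andP; split.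
  by apply: contraNneq ij => -[->].
apply/eqP/setP => -[[k r]|]; rewrite !inE //.
by rewrite !myc_rel_some /star_rel (negbTE i0) (negbTE j0).
Qed.

Definition last_leaf_level (x : V) : V := if x is Some (_, s) then Some (ord_max, s) else x.

(* Each u_i^s in (T_H)_t is a twin of u_m^s, which lies outside (T_H)_t. *)
Lemma TH_twin_lower_bound S : twin_cover E S -> #|TH| <= #|S|.
Proof.
move=> coverS; apply: (twin_cover_lower_bound (g := last_leaf_level)) coverS _.
move=> [[i s]|]; last by rewrite inE.
rewrite mem_TH => /andP[i_pos i_lt]; apply/andP; split.
  by rewrite mem_TH /= ltnn andbF.
apply: twins_same_level; rewrite /= -?lt0n //; first exact: ltnW hm.
by apply: contraTneq i_lt => ->; rewrite /= ltnn.
Qed.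

Lemma card_TH : #|TH| = (t.+1 * (m - 1))%N.
Proof.
pose A := [set i : 'I_m.+1 | 0 < i < m].
have cardA : #|A| = (m - 1)%N.
  have -> : A = ~: [set ord0; ord_max].
    by apply/setP=> -[i hi]; rewrite !inE -!val_eqE /=; lia.
  by rewrite cardsCs setCK cards2 card_ord -val_eqE /=; case: m hm => [|[|k]].
have -> : TH = Some @: setX A [set: 'I_t.+1].
  apply/setP => -[[i s]|]; last by rewrite inE; apply/esym/imsetP => -[].
  by rewrite mem_TH mem_imset ?inE ?andbT //; exact: Some_inj.
rewrite card_imset; last exact: Some_inj.
by rewrite cardsX cardA cardsT card_ord mulnC.
Qed.

End StarMycielskian.

Theorem mainTheorem11 (m t : nat) (hm : 2 <= m) (ht : 1 <= t) :
  min_twin_cover (@myc_rel _ (@star_rel m) t) (TH_t m t) /\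
  min_determining_set (@myc_rel _ (@star_rel m) t) (TH_t m t) /\
  det_number (@myc_rel _ (@star_rel m) t) = (t.+1 * (m - 1))%N.
Proof.
have min_cover : min_twin_cover (@myc_rel _ (@star_rel m) t) (TH_t m t).
  by split; [exact: TH_twin_cover | exact: TH_twin_lower_bound].
have min_det := min_determining_of_min_twin_cover
  (myc_rel_sym (t := t) (@star_sym m)) (myc_rel_irr (t := t) (@star_irr m))
  min_cover (TH_determining hm ht).
by split=> //; split=> //; rewrite (det_number_min min_det) card_TH.
Qed.
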